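(* Let $G$ be a directed graph and $V_C\subseteq V(G)$ such that the LTI network on $G$ with control nodes $V_C$ is strongly structurally controllable. Let $(u,v)\in V(G)\times V(G)$ with $(u,v)\notin E(G)$, and let $G'=G+\{(u,v)\}$. If the LTI network on $G'$ with control nodes $V_C$ is strongly structurally controllable, then there exist a set $\mathcal{C}$ of node-disjoint chains covering $V(G)$ with set of sources $V_C$ and a time function $T$ for $\mathcal{C}$ such that $G\in\mathcal{G}^{\mathcal{C},T}$ and $G'\in\mathcal{G}^{\mathcal{C},T}$.
   Context: Graphs are directed, self-loops allowed; $V(G)=\{1,\ldots,n\}$; $G+E'$ has node set $V(G)$ and edge set $E(G)\cup E'$. $\mathcal{Q}(G)=\{A\in\mathbb{R}^{n\times n}:\text{for } i\neq j,\ A_{ij}\neq0\iff(j,i)\in E(G)\}$. For $V_C=\{j_1,\ldots,j_m\}$, $B=[e_{j_1},\ldots,e_{j_m}]$; the LTI network $\dot x=Ax+Bu$ on $G$ is strongly structurally controllable if $(A,B)$ is controllable for all $A\in\mathcal{Q}(G)$. A chain is a directed path graph with source (start node) and sink (end node); for a non-sink $v$, $v+1$ is its out-neighbor in the chain. For node-disjoint chains $\mathcal{C}=\{C_1,\ldots,C_m\}$, $V=\bigcup_iV(C_i)$, $\gamma=|V|-m+1$, a time function is $T:V\to\{1,\ldots,\gamma\}$ with (1) $T(v)=1$ for every source; (2) distinct non-source nodes get distinct values; (3) $T(v)<T(v+1)$ for non-sink $v$. $T_{\max}(v)=\gamma$ for a sink $v$, else $T_{\max}(v)=T(v+1)-1$.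 $\mathcal{G}^{\mathcal{C},T}$ is the set of graphs $G$ with $V(G)=V$, $\bigcup_iE(C_i)\subseteq E(G)$, and $(u,v)\notin E(G)$ whenever $(u,v)\notin\bigcup_iE(C_i)$ and $T_{\max}(u)<T(v)$. *)

From HB Require Import structures.
From mathcomp Require Import all_boot all_order all_algebra.
From mathcomp Require Import Rstruct.
From Stdlib Require Import Rdefinitions.
Set Implicit Arguments. Unset Strict Implicit. Unset Printing Implicit Defensive.
Import Order.TTheory GRing.Theory Num.Theory.

(* A directed graph on nodes 'I_n (= {1..n} shifted to {0..n-1}),
   self-loops allowed, is given by its edge set E : {set 'I_n * 'I_n}. *)

Local Open Scope ring_scope.

Definition in_Q n (E : {set 'I_n * 'I_n}) (A : 'M[R]_n) : Prop :=
  forall i j : 'I_n, i != j -> (A i j != 0) = ((j, i) \in E).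

(* Input matrix B = [e_{j_1}, ..., e_{j_m}] for the control node set VC. *)
Definition input_mx n (VC : {set 'I_n}) : 'M[R]_(n, #|VC|) :=
  \matrix_(i, k) (i == enum_val k)%:R.

Definition controllable n m (A : 'M[R]_n) (B : 'M[R]_(n, m)) : bool :=
  \rank (\mxrow_(k < n) (A ^+ k *m B)) == n.

Definition SSC n (E : {set 'I_n * 'I_n}) (VC : {set 'I_n}) : Prop :=
  forall A : 'M[R]_n, in_Q E A -> controllable A (input_mx VC).

Local Close Scope ring_scope.

(* A family of chains is a list of node sequences; each sequence c = [v1; ...; vk]
   is the chain v1 -> v2 -> ... -> vk (source v1, sink vk). *)
Definition chain_edges n (cs : seq (seq 'I_n)) : {set 'I_n * 'I_n} :=
  [set e | has (fun c => e \in zip c (behead c)) cs].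

Definition sources n (cs : seq (seq 'I_n)) : {set 'I_n} :=
  [set v | has (fun c => head v c == v) [seq c <- cs | c != [::]]].

Definition chain_cover n (cs : seq (seq 'I_n)) (VC : {set 'I_n}) : Prop :=
  [/\ all (fun c => c != [::]) cs,
      uniq (flatten cs),
      (forall v : 'I_n, v \in flatten cs) &
      sources cs = VC].

Definition gamma n (cs : seq (seq 'I_n)) : nat := n - size cs + 1.

(* out-neighbour v+1 of v in its chain (None iff v is a sink) *)
Definition succ n (cs : seq (seq 'I_n)) (v : 'I_n) : option 'I_n :=
  [pick w | (v, w) \in chain_edges cs].

Definition time_function n (cs : seq (seq 'I_n)) (T : 'I_n -> nat) : Prop :=
  [/\ (forall v, 1 <= T v <= gamma cs),
      (forall v, v \in sources cs -> T v = 1),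
      (forall v w, v \notin sources cs -> w \notin sources cs -> v != w -> T v != T w) &
      (forall v w, (v, w) \in chain_edges cs -> T v < T w)].

Definition Tmax n (cs : seq (seq 'I_n)) (T : 'I_n -> nat) (v : 'I_n) : nat :=
  match succ cs v with
  | Some w => T w - 1
  | None => gamma cs
  end.

Definition in_GCT n (cs : seq (seq 'I_n)) (T : 'I_n -> nat) (E : {set 'I_n * 'I_n}) : Prop :=
  chain_edges cs \subset E /\
  (forall u v : 'I_n, (u, v) \notin chain_edges cs -> Tmax cs T u < T v -> (u, v) \notin E).

From mathcomp Require Import all_boot all_order all_algebra zify.
From mathcomp Require Import Rstruct.
From Stdlib Require Import Rdefinitions.
Set Implicit Arguments. Unset Strict Implicit. Unset Printing Implicit Defensive.
Import Order.TTheory GRing.Theory Num.Theory.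

(* The chains are grown greedily, in the manner of zero forcing. Keep a set D
   of reached nodes, initially V_C, covered by chains with sources V_C. If some
   x in D has exactly one out-neighbour y outside D in G', and (x, y) is an
   edge of G, then x ends its chain: append y to it, with the next time value.
   As y is the only out-neighbour of x outside D, every other out-neighbour of
   x already has a smaller time, which is what G^{C,T} asks of G' (and of G).
   Strong structural controllability keeps the process going until D = V. If
   every node of D had 0 or at least 2 out-neighbours outside D, some A in Q(G)
   would have all its columns summing to zero over the rows outside D, and the
   indicator of the complement of D would be a left kernel vector of the Kalman
   matrix. So some x in D has exactly one out-neighbour outside D in G'; if
   that edge is (u, v), then u has none in G, so a node doing the same in G is
   not u and also works in G'. *)

Definition out_nbrs n (E : {set 'I_n * 'I_n}) (D : {set 'I_n}) (x : 'I_n) :=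
  [set w | ((x, w) \in E) && (w \notin D)].

Lemma out_nbrsS n (E F : {set 'I_n * 'I_n}) D x :
  E \subset F -> out_nbrs E D x \subset out_nbrs F D x.
Proof.
by move=> sEF; apply/subsetP => w; rewrite !inE => /andP[/(subsetP sEF) -> ->].
Qed.

Lemma out_nbrs_setU1 n (E : {set 'I_n * 'I_n}) D u v x :
  x != u -> out_nbrs ((u, v) |: E) D x = out_nbrs E D x.
Proof.
by move=> xu; apply/setP => w; rewrite !inE xpair_eqE (negbTE xu).
Qed.

Section LeftKernel.
Local Open Scope ring_scope.

Lemma controllable_left_kernel n m (A : 'M[R]_n) (B : 'M[R]_(n, m)) (z : 'rV[R]_n) :
  controllable A B -> z *m A = 0 -> z *m B = 0 -> z = 0.
Proof.
move=> ctrl zA zB; apply: (row_free_inj ctrl); rewrite mul0mx mul_mxrow.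
rewrite -(mxrow0 (q_ := fun _ => m)); apply: eq_mxrow => -[[|k] _] /=.
  by rewrite expr0 mul1mx.
by rewrite exprS mulmxA -mulmxE mulmxA zA !mul0mx.
Qed.

(* Each edge leaving D gets weight 1, except that one edge out of every
   x \in D gets weight 1 - #|out_nbrs E D x|, nonzero by hypothesis; the
   diagonal entries outside D absorb the remaining column sums. *)
Lemma Q_left_kernel_indicator n (E : {set 'I_n * 'I_n}) (D : {set 'I_n}) :
  (forall x, x \in D -> #|out_nbrs E D x| != 1%N) ->
  exists2 A : 'M[R]_n, in_Q E A & \row_i (i \notin D)%:R *m A = 0.
Proof.
move=> hdeg; set N := out_nbrs E D.
pose wt j i : R := 1 - #|N j|%:R *+ ((j \in D) && ([pick k in N j] == Some i)).
pose off i j : R := if (j, i) \in E then wt j i else 0.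
exists (\matrix_(i, j) if i == j then - \sum_(k | (k \notin D) && (k != j)) off k j
                       else off i j).
  move=> i j nij; rewrite mxE (negbTE nij) /off.
  case: ifP => _; last by rewrite eqxx.
  rewrite /wt; case: (boolP (_ && _)) => [/andP[jD _]|_]; last by rewrite subr0 oner_neq0.
  by rewrite subr_eq0 eq_sym pnatr_eq1 hdeg.
apply/rowP => j; rewrite !mxE.
under eq_bigr do rewrite !mxE mulr_natl mulrb.
rewrite -big_mkcond /=.
case: (boolP (j \in D)) => jD.
  have -> : \sum_(i | i \notin D) (if i == j then - \sum_(k | (k \notin D) && (k != j)) off k j
                                   else off i j) = \sum_(i in N j) wt j i.
    rewrite big_mkcond [RHS]big_mkcond; apply: eq_bigr => i _; rewrite /off !inE.
    case: (boolP (i \in D)) => iD; first by rewrite andbF.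
    have -> : (i == j) = false by apply: contraNF iD => /eqP ->.
    by rewrite andbT; case: ifP.
  rewrite /wt sumrB sumr_const jD /=; case: pickP => [p pN | noN]; last first.
    by rewrite big_pred0 // (eq_card0 noN) subr0.
  rewrite (bigD1 p pN) /= eqxx big1 ?addr0 ?subrr // => i /andP[_ ip].
  by rewrite eq_sym (inj_eq Some_inj) (negbTE ip).
rewrite (bigD1 j) //= eqxx big_mkcond addrC -big_mkcond.
rewrite (eq_bigr (fun i => off i j)) ?addrN // => i /andP[_ /negbTE ->] //.
Qed.

Lemma SSC_forcing n (E : {set 'I_n * 'I_n}) (VC D : {set 'I_n}) :
  SSC E VC -> VC \subset D -> D != setT -> exists2 x, x \in D & #|out_nbrs E D x| = 1%N.
Proof.
move=> ssc sVD nDT.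
case: (boolP [exists x in D, #|out_nbrs E D x| == 1%N]) => [/exists_inP[x xD /eqP]|noforce].
  by exists x.
have [|A AQ zA] := @Q_left_kernel_indicator n E D.
  by move=> x xD; apply: contra noforce => one; apply/exists_inP; exists x.
have zB : \row_i (i \notin D)%:R *m input_mx VC = 0.
  apply/rowP => k; rewrite !mxE (bigD1 (enum_val k)) //= big1.
    by rewrite !mxE eqxx (subsetP sVD _ (enum_valP k)) mul0r addr0.
  by move=> i /negbTE ik; rewrite !mxE ik mulr0.
have /rowP z0 := controllable_left_kernel (ssc A AQ) zA zB.
move: nDT; rewrite -subTset => /subsetPn[i _ iD].
by have /eqP := z0 i; rewrite !mxE iD oner_eq0.
Qed.

End LeftKernel.

Lemma SSC_forcing_edge n (E : {set 'I_n * 'I_n}) (VC D : {set 'I_n}) u v :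
  SSC E VC -> (u, v) \notin E -> SSC ((u, v) |: E) VC -> VC \subset D -> D != setT ->
  exists x y, [/\ x \in D, out_nbrs ((u, v) |: E) D x = [set y] & (x, y) \in E].
Proof.
move=> ssc uvE ssc' sVD nDT.
have [x xD /eqP/cards1P[y Ny]] := SSC_forcing ssc' sVD nDT.
have : y \in out_nbrs ((u, v) |: E) D x by rewrite Ny set11.
rewrite inE in_setU1 => /andP[/orP[/eqP[ex ey]|xyE] _]; last by exists x, y.
subst x y; have [x x'D /eqP/cards1P[y N'y]] := SSC_forcing ssc sVD nDT.
have xu : x != u.
  apply/negP => /eqP ex; subst x.
  have yN : y \in out_nbrs E D u by rewrite N'y set11.
  have := subsetP (out_nbrsS D u (subsetU1 (u, v) E)) _ yN.
  rewrite Ny => /set1P ey; move: yN; rewrite inE ey => /andP[uvE' _].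
  by rewrite uvE' in uvE.
exists x, y; split; rewrite ?out_nbrs_setU1 //.
by have := set11 y; rewrite -N'y inE => /andP[].
Qed.

Lemma mem_zip (T1 T2 : eqType) (s : seq T1) (t : seq T2) a b :
  (a, b) \in zip s t -> a \in s /\ b \in t.
Proof.
elim: s t => [|x s IH] [|y t] //=; rewrite in_cons => /orP[/eqP[-> ->]|/IH[sa tb]].
  by split; apply: mem_head.
by split; rewrite ?inE ?sa ?tb ?orbT.
Qed.

Section ChainExtension.
Variable T : eqType.
Implicit Types (x y : T) (c : seq T) (cs : seq (seq T)).

Definition extend_chain x y c := if last x c == x then rcons c y else c.

Lemma mem_last_nonempty x c : c != [::] -> last x c \in c.
Proof. by case: c => // a c _; apply: (mem_last a c). Qed.

Lemma last_chain_end c x :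
  x \in c -> (forall w, (x, w) \notin zip c (behead c)) -> last x c = x.
Proof.
elim: c => [|a c IH] //=; case: c IH => [|b c] IH /=; first by rewrite inE => /eqP ->.
rewrite in_cons => /orP[/eqP xa|xc] noedge.
  by have := noedge b; rewrite xa mem_head.
apply: IH => // w; apply: contra (noedge w) => xw.
by rewrite in_cons xw orbT.
Qed.

Lemma zip_behead_rcons a y c :
  zip (rcons (a :: c) y) (behead (rcons (a :: c) y)) = rcons (zip (a :: c) c) (last a c, y).
Proof. by elim: c a => [|b c IH] a //=; rewrite -IH. Qed.

Lemma extend_chain_nonempty x y c : c != [::] -> extend_chain x y c != [::].
Proof. by rewrite /extend_chain; case: ifP => // _ _; rewrite -size_eq0 size_rcons. Qed.

Lemma head_extend_chain d x y c : c != [::] -> head d (extend_chain x y c) = head d c.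
Proof. by rewrite /extend_chain; case: ifP => //; case: c. Qed.

Lemma extend_chain_id x y cs :
  all (fun c => c != [::]) cs -> x \notin flatten cs -> map (extend_chain x y) cs = cs.
Proof.
elim: cs => [|c cs IH] //= /andP[nc ncs]; rewrite mem_cat negb_or => /andP[xc xcs].
rewrite IH // /extend_chain; case: eqP => // ex.
by move: (mem_last_nonempty x nc); rewrite ex (negbTE xc).
Qed.

Section ExtendLastOf.
Variables x y : T.

(* Uniqueness makes the chain ending in x the only one that is extended. *)
Lemma perm_flatten_extend cs :
  all (fun c => c != [::]) cs -> uniq (flatten cs) -> has (fun c => last x c == x) cs ->
  perm_eq (flatten (map (extend_chain x y) cs)) (y :: flatten cs).
Proof.
elim: cs => [|c cs IH] //= /andP[nc ncs]; rewrite cat_uniq => /and3P[_ dis ucs].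
rewrite [extend_chain x y c]/extend_chain; case: ifP => [/eqP ex _|_ /= hx].
  have xcs : x \notin flatten cs.
    by apply: contra dis => xcs; apply/hasP; exists x; rewrite // -ex mem_last_nonempty.
  by rewrite extend_chain_id // cat_rcons -cat1s perm_catCA.
apply: perm_trans (_ : perm_eq _ (c ++ y :: flatten cs)) _.
  by rewrite perm_cat2l IH.
by rewrite -cat1s perm_catCA.
Qed.

Lemma has_edge_extend cs e :
  all (fun c => c != [::]) cs -> uniq (flatten cs) -> has (fun c => last x c == x) cs ->
  has (fun c => e \in zip c (behead c)) (map (extend_chain x y) cs) =
  (e == (x, y)) || has (fun c => e \in zip c (behead c)) cs.
Proof.
elim: cs => [|c cs IH] //= /andP[nc ncs]; rewrite cat_uniq => /and3P[_ dis ucs].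
rewrite [extend_chain x y c]/extend_chain; case: ifP => [/eqP ex _|_ /= hx].
  have xcs : x \notin flatten cs.
    by apply: contra dis => xcs; apply/hasP; exists x; rewrite // -ex mem_last_nonempty.
  rewrite extend_chain_id //; case: c nc ex {dis} => [|a c] // _ /= ex.
  by rewrite zip_behead_rcons mem_rcons in_cons ex orbA.
by rewrite IH // orbCA.
Qed.

End ExtendLastOf.
End ChainExtension.

Lemma chain_edges_extend n (cs : seq (seq 'I_n)) x y :
  all (fun c => c != [::]) cs -> uniq (flatten cs) -> has (fun c => last x c == x) cs ->
  chain_edges (map (extend_chain x y) cs) = (x, y) |: chain_edges cs.
Proof. by move=> ne u hx; apply/setP => e; rewrite in_setU1 !inE has_edge_extend. Qed.

Lemma sources_extend n (cs : seq (seq 'I_n)) x y :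
  all (fun c => c != [::]) cs -> sources (map (extend_chain x y) cs) = sources cs.
Proof.
move=> ne; have ne' : all (fun c => c != [::]) (map (extend_chain x y) cs).
  by rewrite all_map; apply: sub_all ne => c; apply: extend_chain_nonempty.
apply/setP => w; rewrite !inE (all_filterP ne) (all_filterP ne') has_map.
by apply: eq_in_has => c /(allP ne) nc /=; rewrite head_extend_chain.
Qed.

Section GreedyChains.
Variables (n : nat) (E : {set 'I_n * 'I_n}) (VC : {set 'I_n}) (u v : 'I_n).
Let E' := (u, v) |: E.

Record chain_state (D : {set 'I_n}) (cs : seq (seq 'I_n)) : Prop := {
  sources_sub : VC \subset D;
  chains_nonempty : all (fun c => c != [::]) cs;
  chains_uniq : uniq (flatten cs);
  mem_chains : forall w, (w \in flatten cs) = (w \in D);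
  chains_sources : sources cs = VC;
  size_chains : size cs = #|VC|;
  chain_edges_sub : chain_edges cs \subset E }.

(* [time_out_nbr] is what puts G' in G^{C,T}: T_max a = T b - 1 when b follows a. *)
Record timing (D : {set 'I_n}) (cs : seq (seq 'I_n)) (T : 'I_n -> nat) : Prop := {
  time_range : forall w, w \in D -> 1 <= T w <= #|D| - #|VC| + 1;
  time_sources : forall w, w \in VC -> T w = 1;
  time_inj : {in D &, forall w1 w2, w1 \notin VC -> w2 \notin VC -> w1 != w2 -> T w1 != T w2};
  time_chain_edge : forall a b, (a, b) \in chain_edges cs -> T a < T b;
  time_out_nbr : forall a b w, (a, b) \in chain_edges cs -> (a, w) \in E' -> w != b ->
    (w \in D) && (T w < T b) }.

Lemma chain_edges_mem D cs a b : chain_state D cs -> (a, b) \in chain_edges cs ->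
  (a \in D) /\ (b \in D).
Proof.
move=> CS; rewrite inE => /hasP[c cin /mem_zip[ac bc]].
by rewrite -!(mem_chains CS); split; apply/flattenP; exists c => //; apply: mem_behead.
Qed.

Let singletons := [seq [:: s] | s <- enum VC].

Lemma chain_edges_singletons : chain_edges singletons = set0.
Proof. by apply/setP => e; rewrite inE in_set0 has_map; apply/hasPn. Qed.

Lemma chain_state_init : chain_state VC singletons.
Proof.
have ne : all (fun c => c != [::]) singletons by apply/allP => c /mapP[s _ ->].
split => //.
- by rewrite flatten_seq1 enum_uniq.
- by move=> w; rewrite flatten_seq1 mem_enum.
- apply/setP => w; rewrite inE (all_filterP ne) has_map.
  by rewrite (has_pred1 w (enum VC)) mem_enum.
- by rewrite size_map cardE.
- by rewrite chain_edges_singletons sub0set.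
Qed.

Lemma timing_init : timing VC singletons (fun _ => 1).
Proof.
split => [w _|w _|w1 w2 w1VC _ /negP[] //|a b|a b w];
  by rewrite ?chain_edges_singletons ?in_set0 ?subnn.
Qed.

Lemma chain_end_of_forcing D cs T x y : chain_state D cs -> timing D cs T ->
  x \in D -> out_nbrs E' D x = [set y] -> has (fun c => last x c == x) cs.
Proof.
move=> CS TS xD Nx; have : y \in out_nbrs E' D x by rewrite Nx set11.
rewrite inE => /andP[xyE' yD].
have noedge w : (x, w) \notin chain_edges cs.
  apply/negP => xw; have [_ wD] := chain_edges_mem CS xw.
  have yw : y != w by apply: contraNneq yD => ->.
  by have /andP[] := time_out_nbr TS xw xyE' yw; rewrite (negbTE yD).
move: xD; rewrite -(mem_chains CS) => /flattenP[c cin xc].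
apply/hasP; exists c => //; apply/eqP; apply: last_chain_end => // w.
by apply: contra (noedge w) => xw; rewrite inE; apply/hasP; exists c.
Qed.

Lemma chain_state_extend D cs x y : chain_state D cs -> has (fun c => last x c == x) cs ->
  y \notin D -> (x, y) \in E -> chain_state (y |: D) (map (extend_chain x y) cs).
Proof.
case=> sVD ne ucs mcs scs size_cs sE hx yD xyE.
have pcs := perm_flatten_extend y ne ucs hx.
split.
- exact: subset_trans sVD (subsetU1 _ _).
- by rewrite all_map; apply: sub_all ne => c; apply: extend_chain_nonempty.
- by rewrite (perm_uniq pcs) /= mcs yD ucs.
- by move=> w; rewrite (perm_mem pcs) in_cons mcs in_setU1.
- by rewrite sources_extend.
- by rewrite size_map.
- by rewrite chain_edges_extend // subUset sub1set xyE.
Qed.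

Lemma timing_extend D cs T x y : chain_state D cs -> timing D cs T ->
  has (fun c => last x c == x) cs -> x \in D -> out_nbrs E' D x = [set y] ->
  timing (y |: D) (map (extend_chain x y) cs)
         (fun w => if w == y then #|D| - #|VC| + 2 else T w).
Proof.
move=> CS [range srcs inj incr outn] hx xD Nx.
have : y \in out_nbrs E' D x by rewrite Nx set11.
rewrite inE => /andP[xyE' yD].
have neqy w : w \in D -> (w == y) = false by move=> wD; apply: contraNF yD => /eqP <-.
have VCD : #|VC| <= #|D| by apply: subset_leq_card (sources_sub CS).
have cardD : #|y |: D| = #|D|.+1 by rewrite cardsU1 yD.
have Tle w : w \in D -> T w <= #|D| - #|VC| + 1 by move=> /range/andP[].
have yVC : y \notin VC by apply: contra yD; apply: (subsetP (sources_sub CS)).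
have ce := chain_edges_extend y (chains_nonempty CS) (chains_uniq CS) hx.
(* Identifies the two elaborations of #|D|, which lia would take as distinct atoms. *)
set k := #|D| - #|VC| in Tle *.
split.
- move=> w; rewrite in_setU1 cardD => /orP[/eqP->|wD]; rewrite ?eqxx; first lia.
  by rewrite neqy //; have := range w wD; lia.
- by move=> w wVC; rewrite neqy ?srcs // (subsetP (sources_sub CS)).
- move=> w1 w2; rewrite !in_setU1 => /orP[/eqP->|w1D] /orP[/eqP->|w2D] //;
    rewrite ?eqxx ?neqy //.
  + by move=> _ _ _; have := Tle w2 w2D; lia.
  + by move=> _ _ _; have := Tle w1 w1D; lia.
  + exact: inj.
- move=> a b; rewrite ce in_setU1 => /orP[/eqP[-> ->]|ab].
    by rewrite eqxx neqy //; have := Tle x xD; lia.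
  by have [aD bD] := chain_edges_mem CS ab; rewrite !neqy // incr.
- move=> a b w; rewrite ce in_setU1 => /orP[/eqP[-> ->]|ab] aw wb.
    have wD : w \in D.
      apply: contraNT wb => wD; have : w \in out_nbrs E' D x by rewrite inE aw wD.
      by rewrite Nx => /set1P ->.
    by rewrite in_setU1 wD orbT eqxx neqy //=; have := Tle w wD; lia.
  have [_ bD] := chain_edges_mem CS ab; have /andP[wD lt] := outn _ _ _ ab aw wb.
  by rewrite in_setU1 wD orbT !neqy.
Qed.

Lemma greedy_complete : SSC E VC -> (u, v) \notin E -> SSC E' VC ->
  exists cs T, chain_state setT cs /\ timing setT cs T.
Proof.
move=> ssc uvE ssc'.
suff grow k D cs T : #|~: D| = k -> chain_state D cs -> timing D cs T ->
    exists cs T, chain_state setT cs /\ timing setT cs T.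
  exact: grow erefl chain_state_init timing_init.
elim: k D cs T => [|k IH] D cs T hk CS TS.
  by exists cs, T; rewrite -[D]setCK (cards0_eq hk) setC0 in CS TS.
have nDT : D != setT by apply/eqP => DT; move: hk; rewrite DT setCT cards0.
have [x [y [xD Nx xyE]]] := SSC_forcing_edge ssc uvE ssc' (sources_sub CS) nDT.
have yD : y \notin D by have := set11 y; rewrite -Nx inE => /andP[].
have hx := chain_end_of_forcing CS TS xD Nx.
apply: IH (chain_state_extend CS hx yD xyE) (timing_extend CS TS hx xD Nx).
have := cardsD1 y (~: D); rewrite hk inE yD add1n => -[->].
by rewrite setCU setDE setIC.
Qed.

Lemma chain_cover_complete cs : chain_state setT cs -> chain_cover cs VC.
Proof. by case=> _ ne ucs mcs scs _ _; split=> // w; rewrite mcs in_setT. Qed.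

Lemma gamma_complete cs : chain_state setT cs -> gamma cs = #|[set: 'I_n]| - #|VC| + 1.
Proof. by move=> CS; rewrite /gamma (size_chains CS) cardsT card_ord. Qed.

Lemma time_function_complete cs T :
  chain_state setT cs -> timing setT cs T -> time_function cs T.
Proof.
move=> CS [range srcs inj incr _].
rewrite /time_function (chains_sources CS) (gamma_complete CS).
by split=> // [w|w1 w2]; [apply: range | apply: inj].
Qed.

Lemma in_GCT_complete cs T (F : {set 'I_n * 'I_n}) :
  chain_state setT cs -> timing setT cs T ->
  chain_edges cs \subset F -> F \subset E' -> in_GCT cs T F.
Proof.
move=> CS TS ceF FE'; split=> // a w nce; apply: contraTN => aF.
have aw : (a, w) \in E' := subsetP FE' _ aF.
rewrite -leqNgt /Tmax /succ; case: pickP => [b ab|_].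
  have wb : w != b by apply: contraNneq nce => ->.
  by have /andP[_] := time_out_nbr TS ab aw wb; lia.
by rewrite (gamma_complete CS); case/andP: (time_range TS (in_setT w)).
Qed.

End GreedyChains.

Theorem lemma1 (n : nat) (E : {set 'I_n * 'I_n}) (VC : {set 'I_n}) (u v : 'I_n) :
  SSC E VC -> (u, v) \notin E -> SSC ((u, v) |: E) VC ->
  exists (cs : seq (seq 'I_n)) (T : 'I_n -> nat),
    [/\ chain_cover cs VC, time_function cs T, in_GCT cs T E & in_GCT cs T ((u, v) |: E)].
Proof.
move=> ssc uvE ssc'.
have [cs [T [CS TS]]] := greedy_complete ssc uvE ssc'.
have sEE' : E \subset (u, v) |: E := subsetU1 _ _.
exists cs, T; split.
- exact: chain_cover_complete CS.
- exact: time_function_complete CS TS.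
- exact: in_GCT_complete CS TS (chain_edges_sub CS) sEE'.
- exact: in_GCT_complete CS TS (subset_trans (chain_edges_sub CS) sEE') (subxx _).
Qed.
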